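(* Let $\mathcal{F}$ be a fusion ring with structure constants $(N_{i,j}^k)$, index $1$ being the unit. Suppose there is an index $k_0$ such that $N_{i,j}^{k_0}\neq0$ for all indices $i,j\neq1$. Then $\mathcal{F}$ passes the zero spectrum criterion, i.e. there are no indices $i_1,\dots,i_9$ satisfying all of the following: (1) $N_{i_4,i_1}^{i_6},\ N_{i_5,i_4}^{i_2},\ N_{i_5,i_6}^{i_3},\ N_{i_7,i_9}^{i_1},\ N_{i_2,i_7}^{i_8},\ N_{i_8,i_9}^{i_3}\neq0$; (2) $\sum_kN_{i_4,i_7}^kN_{i_5^*,i_8}^kN_{i_6,i_9^*}^k=0$; (3) $N_{i_2,i_1}^{i_3}=1$; (4) $\sum_kN_{i_5,i_4}^kN_{i_3,i_1^*}^k=1$ or $\sum_kN_{i_2,i_4^*}^kN_{i_3,i_6^*}^k=1$ or $\sum_kN_{i_5^*,i_2}^kN_{i_6,i_1^*}^k=1$; (5) $\sum_kN_{i_2,i_7}^kN_{i_3,i_9^*}^k=1$ or $\sum_kN_{i_8,i_7^*}^kN_{i_3,i_1^*}^k=1$ or $\sum_kN_{i_2^*,i_8}^kN_{i_1,i_9^*}^k=1$.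
   Context: A fusion ring is a ring which is a free $\mathbb{Z}$-module with finite basis $\{b_1,\dots,b_r\}$, $b_ib_j=\sum_kN_{i,j}^kb_k$, $N_{i,j}^k\in\mathbb{Z}_{\ge0}$, associative, unit $b_1$, duality $i\mapsto i^*$ with $N_{i,k}^1=N_{k,i}^1=\delta_{i^*,k}$, and Frobenius reciprocity $N_{i,j}^k=N_{i^*,k}^j=N_{k,j^*}^i$. (If indices as in (1)–(5) exist, the fusion ring admits no categorification over any field; ''passing the zero spectrum criterion'' means no such indices exist.) *)

From mathcomp Require Import all_boot.
Set Implicit Arguments.
Unset Strict Implicit.
Unset Printing Implicit Defensive.

(* A fusion ring of rank r.+1 with basis b_0, ..., b_r, given by its structure
   constants N i j k = N_{i,j}^k (b_i b_j = \sum_k N_{i,j}^k b_k) and its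
   duality d : i |-> i^*.  The unit is the basis element of index ord0
   (index "1" in the paper). *)
Definition fusion_ring (r : nat) (N : 'I_r.+1 -> 'I_r.+1 -> 'I_r.+1 -> nat)
    (d : 'I_r.+1 -> 'I_r.+1) : Prop :=
  [/\
      (forall i j k l : 'I_r.+1,
         \sum_(m < r.+1) N i j m * N m k l = \sum_(m < r.+1) N j k m * N i m l),
      (forall i j : 'I_r.+1, N ord0 i j = (i == j) /\ N i ord0 j = (i == j)),
      (forall i k : 'I_r.+1, N i k ord0 = (d i == k) /\ N k i ord0 = (d i == k))
    &
      (forall i j k : 'I_r.+1, N i j k = N (d i) k j /\ N i j k = N k (d j) i)].

Definition zero_spectrum_indices (r : nat)
    (N : 'I_r.+1 -> 'I_r.+1 -> 'I_r.+1 -> nat) (d : 'I_r.+1 -> 'I_r.+1)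
    (i1 i2 i3 i4 i5 i6 i7 i8 i9 : 'I_r.+1) : Prop :=
  [/\
      ([/\ N i4 i1 i6 != 0, N i5 i4 i2 != 0 & N i5 i6 i3 != 0] /\
       [/\ N i7 i9 i1 != 0, N i2 i7 i8 != 0 & N i8 i9 i3 != 0]),
      \sum_(k < r.+1) N i4 i7 k * N (d i5) i8 k * N i6 (d i9) k = 0,
      N i2 i1 i3 = 1,
      [\/ \sum_(k < r.+1) N i5 i4 k * N i3 (d i1) k = 1,
          \sum_(k < r.+1) N i2 (d i4) k * N i3 (d i6) k = 1 |
          \sum_(k < r.+1) N (d i5) i2 k * N i6 (d i1) k = 1]
    &
      [\/ \sum_(k < r.+1) N i2 i7 k * N i3 (d i9) k = 1,
          \sum_(k < r.+1) N i8 (d i7) k * N i3 (d i1) k = 1 |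
          \sum_(k < r.+1) N (d i2) i8 k * N i1 (d i9) k = 1]].

Definition passes_zero_spectrum (r : nat)
    (N : 'I_r.+1 -> 'I_r.+1 -> 'I_r.+1 -> nat) (d : 'I_r.+1 -> 'I_r.+1) : Prop :=
  ~ exists i1 i2 i3 i4 i5 i6 i7 i8 i9 : 'I_r.+1,
      zero_spectrum_indices N d i1 i2 i3 i4 i5 i6 i7 i8 i9.

From mathcomp Require Import all_boot.

Set Implicit Arguments.
Unset Strict Implicit.

(* By (2), for every k one of N_{i4,i7}^k, N_{i5^*,i8}^k, N_{i6,i9^*}^k
   vanishes, so k0 shows that one of the six indices i4, i7, i5^*, i8, i6,
   i9^* is the unit.  But if one of them is the unit, two of the six
   non-vanishing constants of (1) collapse to identities between indices,
   and Frobenius reciprocity turns the other constants of (1) into a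
   common constituent k of the three products, contradicting (2). *)

Section FusionRing.

Variables (r : nat) (N : 'I_r.+1 -> 'I_r.+1 -> 'I_r.+1 -> nat)
  (d : 'I_r.+1 -> 'I_r.+1).
Hypothesis fusionN : fusion_ring N d.

Lemma N_unitl i j : N ord0 i j = (i == j).
Proof. by case: fusionN => _ unitN _ _; case: (unitN i j). Qed.

Lemma N_unitr i j : N i ord0 j = (i == j).
Proof. by case: fusionN => _ unitN _ _; case: (unitN i j). Qed.

Lemma N_to_unit i j : N i j ord0 = (d i == j).
Proof. by case: fusionN => _ _ dualN _; case: (dualN i j). Qed.

Lemma N_frobl i j k : N i j k = N (d i) k j.
Proof. by case: fusionN => _ _ _ frobN; case: (frobN i j k). Qed.

Lemma N_frobr i j k : N i j k = N k (d j) i.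
Proof. by case: fusionN => _ _ _ frobN; case: (frobN i j k). Qed.

Lemma N_unitl_neq0 i j : (N ord0 i j != 0) = (i == j).
Proof. by rewrite N_unitl eqb0 negbK. Qed.

Lemma N_unitr_neq0 i j : (N i ord0 j != 0) = (i == j).
Proof. by rewrite N_unitr eqb0 negbK. Qed.

Lemma N_to_unit_neq0 i j : (N i j ord0 != 0) = (d i == j).
Proof. by rewrite N_to_unit eqb0 negbK. Qed.

Lemma dualK : involutive d.
Proof. by move=> i; apply/eqP; rewrite -N_to_unit_neq0 N_frobr N_unitl_neq0. Qed.

Lemma dual_unit : d ord0 = ord0.
Proof. by apply/eqP; rewrite -N_to_unit_neq0 N_unitl_neq0. Qed.

Lemma dual_eq_unit i : (d i == ord0) = (i == ord0).
Proof. by rewrite -{1}dual_unit (inj_eq (can_inj dualK)). Qed.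

Section VanishingTriple.

Variables i1 i2 i3 i4 i5 i6 i7 i8 i9 : 'I_r.+1.
Hypotheses (N416 : N i4 i1 i6 != 0) (N542 : N i5 i4 i2 != 0)
  (N563 : N i5 i6 i3 != 0) (N791 : N i7 i9 i1 != 0)
  (N278 : N i2 i7 i8 != 0) (N893 : N i8 i9 i3 != 0).
Hypothesis vanishing_sum :
  \sum_(k < r.+1) N i4 i7 k * N (d i5) i8 k * N i6 (d i9) k = 0.

Lemma no_common_constituent k :
  N i4 i7 k != 0 -> N (d i5) i8 k != 0 -> N i6 (d i9) k != 0 -> False.
Proof.
move=> n47 n58 n69; move/eqP: vanishing_sum.
rewrite sum_nat_eq0 => /forallP/(_ k).
by rewrite !muln_eq0 (negbTE n47) (negbTE n58) (negbTE n69).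
Qed.

Lemma i4_nonunit : i4 != ord0.
Proof.
apply/eqP => e4; move: N416 N542; rewrite e4 N_unitl_neq0 N_unitr_neq0.
move=> /eqP e16 /eqP e52.
apply: (no_common_constituent (k := i7)).
- by rewrite e4 N_unitl_neq0.
- by rewrite e52 -N_frobl.
- by rewrite -e16 -N_frobr.
Qed.

Lemma i7_nonunit : i7 != ord0.
Proof.
apply/eqP => e7; move: N791 N278; rewrite e7 N_unitl_neq0 N_unitr_neq0.
move=> /eqP e91 /eqP e28.
apply: (no_common_constituent (k := i4)).
- by rewrite e7 N_unitr_neq0.
- by rewrite -e28 -N_frobl.
- by rewrite e91 -N_frobr.
Qed.

Lemma dual_i5_nonunit : d i5 != ord0.
Proof.
rewrite dual_eq_unit; apply/eqP => e5.
move: N542 N563; rewrite e5 !N_unitl_neq0 => /eqP e42 /eqP e63.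
apply: (no_common_constituent (k := i8)).
- by rewrite e42.
- by rewrite e5 dual_unit N_unitl_neq0.
- by rewrite e63 -N_frobr.
Qed.

Lemma i8_nonunit : i8 != ord0.
Proof.
apply/eqP => e8; move: N278 N893; rewrite e8 N_to_unit_neq0 N_unitl_neq0.
move=> /eqP e27 /eqP e93.
apply: (no_common_constituent (k := d i5)).
- by rewrite -e27 -N_frobr -N_frobl.
- by rewrite e8 N_unitr_neq0.
- by rewrite e93 -N_frobr -N_frobl.
Qed.

Lemma i6_nonunit : i6 != ord0.
Proof.
apply/eqP => e6; move: N416 N563; rewrite e6 N_to_unit_neq0 N_unitr_neq0.
move=> /eqP e41 /eqP e53.
apply: (no_common_constituent (k := d i9)).
- by rewrite -(dualK i4) e41 -N_frobl -N_frobr.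
- by rewrite e53 -N_frobl -N_frobr.
- by rewrite e6 N_unitl_neq0.
Qed.

Lemma dual_i9_nonunit : d i9 != ord0.
Proof.
rewrite dual_eq_unit; apply/eqP => e9.
move: N791 N893; rewrite e9 !N_unitr_neq0 => /eqP e71 /eqP e83.
apply: (no_common_constituent (k := i6)).
- by rewrite e71.
- by rewrite e83 -N_frobl.
- by rewrite e9 dual_unit N_unitr_neq0.
Qed.

Lemma no_nonunit_common_constituent k0 :
  ~ (forall i j, i != ord0 -> j != ord0 -> N i j k0 != 0).
Proof.
move=> k0_common; apply: (no_common_constituent (k := k0)); apply: k0_common.
- exact: i4_nonunit.
- exact: i7_nonunit.
- exact: dual_i5_nonunit.
- exact: i8_nonunit.
- exact: i6_nonunit.
- exact: dual_i9_nonunit.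
Qed.

End VanishingTriple.

End FusionRing.

Theorem lemma7p15 (r : nat) (N : 'I_r.+1 -> 'I_r.+1 -> 'I_r.+1 -> nat)
    (d : 'I_r.+1 -> 'I_r.+1) :
  fusion_ring N d ->
  (exists k0 : 'I_r.+1, forall i j : 'I_r.+1,
       i != ord0 -> j != ord0 -> N i j k0 != 0) ->
  passes_zero_spectrum N d.
Proof.
move=> fusionN [k0 k0_common].
move=> [i1 [i2 [i3 [i4 [i5 [i6 [i7 [i8 [i9 [[[N416 N542 N563] [N791 N278 N893]]
  vanishing _ _ _]]]]]]]]]].
exact: (no_nonunit_common_constituent fusionN N416 N542 N563 N791 N278 N893
  vanishing k0_common).
Qed.
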